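(* Let $r$ be a positive integer. There is a constant $c=c(r)$ such that every connected $S_{1,1,1,r}$-subgraph-free graph that is not subcubic has treedepth at most $c$.
   Context: For positive integers $w,x,y,z$, $S_{w,x,y,z}$ is the tree obtained from the star $K_{1,4}$ by subdividing its four edges $w-1$, $x-1$, $y-1$ and $z-1$ times respectively (so it consists of four paths of lengths $w,x,y,z$ sharing a common endvertex, the centre). A graph $G$ is $H$-subgraph-free if $H$ is not isomorphic to any subgraph of $G$ (subgraph obtained by vertex and edge deletions). A graph is subcubic if every vertex has degree at most $3$. The treedepth of $G$ is the minimum height of a rooted forest $F$ on vertex set $V(G)$ such that for every edge $uv$ of $G$, one of $u,v$ is an ancestor of the other in $F$. *)

From mathcomp Require Import all_boot.
Set Implicit Arguments. Unset Strict Implicit. Unset Printing Implicit Defensive.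

Definition simple_graph (T : finType) (e : rel T) : Prop :=
  symmetric e /\ irreflexive e.

Definition connected_graph (T : finType) (e : rel T) : Prop :=
  forall x y : T, connect e x y.

Definition subcubic (T : finType) (e : rel T) : Prop :=
  forall v : T, #|[set u | e v u]| <= 3.

Definition contains_subgraph (n : nat) (h : rel 'I_n) (T : finType) (e : rel T) : Prop :=
  exists f : 'I_n -> T, injective f /\ forall a b : 'I_n, h a b -> e (f a) (f b).

(* The spider S_{w,x,y,z}: vertex set {0,...,w+x+y+z}, centre 0; the leg of
   length l with offset o consists of vertices o+1, ..., o+l, in this order
   along the path, with o+1 adjacent to the centre. *)
Definition leg_adj (o l a b : nat) : bool :=
  ((o < a) && (b == a.+1) && (b <= o + l)) || ((a == 0) && (b == o.+1) && (0 < l)).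

Definition spider_adj (w x y z a b : nat) : bool :=
  [|| leg_adj 0 w a b, leg_adj w x a b, leg_adj (w + x) y a b | leg_adj (w + x + y) z a b].

Definition spider (w x y z : nat) : rel 'I_(1 + w + x + y + z) :=
  fun a b => spider_adj w x y z a b || spider_adj w x y z b a.
Arguments spider : clear implicits.

(* Rooted forests on T given by a parent map (None = root).
   pit p k v = the k-th ancestor of v (pit p 0 v = Some v). *)
Fixpoint pit (T : Type) (p : T -> option T) (k : nat) (v : T) : option T :=
  match k with
  | 0 => Some v
  | k'.+1 => obind p (pit p k' v)
  end.

Definition ancestor (T : Type) (p : T -> option T) (u v : T) : Prop :=
  exists k, pit p k v = Some u.

(* height of the forest is at most c: every root-to-vertex path has at most c
   vertices (this also forces the parent map to be acyclic, i.e. a forest) *)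
Definition forest_height_le (T : Type) (p : T -> option T) (c : nat) : Prop :=
  forall v, pit p c v = None.

Definition treedepth_le (T : finType) (e : rel T) (c : nat) : Prop :=
  exists p : T -> option T, forest_height_le p c /\
    forall u v : T, e u v -> ancestor p u v \/ ancestor p v u.

(* Take a normal (depth-first) spanning tree of the graph: every edge joins an
   ancestor to a descendant, so its height bounds the treedepth, and every
   root-to-vertex chain of the tree is a path of the graph.  Suppose the tree
   has a chain of 8r + 2 vertices.  Since the graph is connected, a vertex v of
   degree at least 4 starts a path with at least 4r further vertices (walk to
   the chain, then along its longer half).  Such a path yields S_{1,1,1,r}: if
   its first r vertices leave three neighbours of v free we are done; otherwise
   a neighbour of v occurs among them, and jumping from v straight to it costs
   fewer than r vertices while freeing one more neighbour of v, which can
   happen at most three times. *)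

From mathcomp Require Import all_boot zify.
Set Implicit Arguments. Unset Strict Implicit.

Lemma take_find_notin (T : eqType) (a : pred T) (s : seq T) y :
  y \in take (find a s) s -> ~~ a y.
Proof.
have noa : ~~ has a (take (find a s) s).
  case: (boolP (has a s)) => [has_a | no_a]; first by rewrite has_take // ltnn.
  by rewrite (hasNfind no_a) take_size.
by move=> hy; apply: contra noa => ay; apply/hasP; exists y.
Qed.

Section ParentMaps.
Variables (T : Type) (p : T -> option T).

Lemma pitS k v : pit p k.+1 v = obind (pit p k) (p v).
Proof.
elim: k v => [|k IH] v; first by rewrite /=; case: (p v).
by rewrite -[pit p k.+2 v]/(obind p (pit p k.+1 v)) IH; case: (p v).
Qed.

Lemma pit_ext (q : T -> option T) : (forall w u, q w = Some u -> p w = Some u) ->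
  forall k v u, pit q k v = Some u -> pit p k v = Some u.
Proof.
move=> ext; elim=> [//|k IH] v u /=.
by case q_k: (pit q k v) => [w|//] /= qw; rewrite (IH _ _ q_k) /=; apply: ext.
Qed.

Lemma ancestor_ext (q : T -> option T) : (forall w u, q w = Some u -> p w = Some u) ->
  forall a b, ancestor q a b -> ancestor p a b.
Proof. by move=> ext a b [k hk]; exists k; apply: pit_ext hk. Qed.

Lemma pit_in (P : pred T) : (forall v u, p v = Some u -> P u) ->
  forall k v u, P v -> pit p k v = Some u -> P u.
Proof.
move=> closedP; elim=> [|k IH] v u Pv /=; first by case=> <-.
by case: (pit p k v) => [w|//] /= /closedP.
Qed.

Lemma root_reach (d : T -> nat) : (forall v u, p v = Some u -> d u < d v) ->
  forall v, exists k rho, pit p k v = Some rho /\ p rho = None.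
Proof.
move=> dec v; move: {2}(d v) (leqnn (d v)) => n; elim: n v => [|n IH] v dv.
  case pv: (p v) => [u|]; last by exists 0, v.
  by have := dec _ _ pv; rewrite ltnNge (leq_trans dv).
case pv: (p v) => [u|]; last by exists 0, v.
have [k [rho [h1 h2]]] := IH u (leq_trans (dec _ _ pv) dv).
by exists k.+1, rho; rewrite pitS pv.
Qed.

End ParentMaps.

Lemma ancestor_path (T : eqType) (p : T -> option T) (e : rel T) (d : T -> nat) :
  (forall v u, p v = Some u -> e v u) -> (forall v u, p v = Some u -> d u < d v) ->
  forall k v u, pit p k v = Some u ->
  exists s, [/\ path e v s, uniq (v :: s), size s = k, last v s = u &
                forall y, y \in v :: s -> d u <= d y].
Proof.
move=> par_e dec; elim=> [|k IH] v u /=.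
  by case=> <-; exists [::]; split => // y; rewrite inE => /eqP ->.
case q_k: (pit p k v) => [w|//] /= pw.
have [s [ps us ss ls ds]] := IH _ _ q_k.
have duw := dec _ _ pw.
exists (rcons s u); split.
- by rewrite rcons_path ps ls par_e.
- rewrite -/(uniq (v :: rcons s u)) -rcons_cons rcons_uniq us andbT.
  apply/negP => /ds.
  by rewrite leqNgt duw.
- by rewrite size_rcons ss.
- by rewrite last_rcons.
- move=> y; rewrite -rcons_cons mem_rcons inE => /orP[/eqP -> //|/ds].
  by move=> h; apply: ltnW (leq_trans duw h).
Qed.

Section Spider.
Variables (T : finType) (e : rel T).
Hypotheses (esym : symmetric e) (eirr : irreflexive e).

Definition free_nbrs (v : T) (t : seq T) : {set T} := [set y | e v y & y \notin t].

Lemma spider_of_leg (r : nat) v a b c (l : seq T) :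
  path e v l -> uniq (v :: l) -> size l = r ->
  e v a -> e v b -> e v c -> a != b -> a != c -> b != c ->
  a \notin l -> b \notin l -> c \notin l -> contains_subgraph (spider 1 1 1 r) e.
Proof.
move=> pl ul sl ea eb ec ab ac bc al bl cl.
pose F (k : nat) := match k with 0 => v | 1 => a | 2 => b | 3 => c | k.+4 => nth v l k end.
have pe k : k < size l -> e (nth v (v :: l) k) (nth v l k) by apply/pathP.
have F_adj i j : spider_adj 1 1 1 r i j -> e (F i) (F j).
  rewrite /spider_adj /leg_adj /=.
  case: i => [|[|[|[|i]]]]; case: j => [|[|[|[|j]]]] //=;
    rewrite ?ltnS ?eqSS ?addn0 ?andbF ?andbT ?orbF //=.
  - by move=> /andP[/eqP -> h]; move: (pe 0); rewrite sl => /(_ h).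
  - by move=> /andP[/eqP -> h]; move: (pe i.+1); rewrite sl; apply.
have /andP[vl ul'] := ul.
have av : a != v by apply: contraTneq ea => ->; rewrite eirr.
have bv : b != v by apply: contraTneq eb => ->; rewrite eirr.
have cv : c != v by apply: contraTneq ec => ->; rewrite eirr.
have onl k : k < size l -> nth v l k \in l by apply: mem_nth.
have F_inj i j : i < 4 + r -> j < 4 + r -> F i = F j -> i = j.
  rewrite -sl.
  case: i => [|[|[|[|i]]]]; case: j => [|[|[|[|j]]]] //= hi hj;
  rewrite ?add4n ?ltnS in hi hj;
  try (move=> h; subst; by rewrite ?eqxx in av bv cv ab ac bc);
  try (move=> h; have := onl _ hj; rewrite -h => h'; by rewrite h' in vl al bl cl);
  try (move=> h; have := onl _ hi; rewrite h => h'; by rewrite h' in vl al bl cl).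
  by move=> /eqP; rewrite nth_uniq // => /eqP ->.
exists (fun k : 'I_(1 + 1 + 1 + 1 + r) => F k); split.
  by move=> i j h; apply: val_inj; exact: (F_inj _ _ (ltn_ord i) (ltn_ord j) h).
by move=> i j /orP[] h; [exact: F_adj | rewrite esym; exact: F_adj].
Qed.

Lemma spider_of_free_leg (r : nat) v (l : seq T) :
  path e v l -> uniq (v :: l) -> size l = r -> 3 <= #|free_nbrs v l| ->
  contains_subgraph (spider 1 1 1 r) e.
Proof.
move=> pl ul sl; rewrite cardE => hA.
set s := enum _ in hA.
have inA i : i < 3 -> e v (nth v s i) && (nth v s i \notin l).
  move=> hi; have : nth v s i \in free_nbrs v l by rewrite -mem_enum mem_nth // (leq_trans hi).
  by rewrite inE.
have neq i j : i < 3 -> j < 3 -> i != j -> nth v s i != nth v s j.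
  by move=> hi hj; rewrite nth_uniq ?enum_uniq // (leq_trans _ hA).
have /andP[e0 n0] := inA 0 isT.
have /andP[e1 n1] := inA 1 isT.
have /andP[e2 n2] := inA 2 isT.
exact: (spider_of_leg pl ul sl e0 e1 e2 (neq 0 1 isT isT isT) (neq 0 2 isT isT isT)
  (neq 1 2 isT isT isT) n0 n1 n2).
Qed.

(* Then some later vertex [w] of [t] is a neighbour of [v] at distance
   less than [r] from the start; jumping from [v] directly to [w] loses fewer
   than [r] vertices of [t] and frees the first vertex of [t]. *)
Lemma shortcut (r : nat) v t :
  0 < r -> 4 <= #|[set y | e v y]| -> path e v t -> uniq (v :: t) -> r <= size t ->
  #|free_nbrs v (take r t)| < 3 ->
  exists t', [/\ path e v t', uniq (v :: t'), size t < size t' + r &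
                 #|free_nbrs v t| < #|free_nbrs v t'|].
Proof.
move=> r_gt0 deg_v; case: t => [|t1 t]; first by rewrite leqNgt r_gt0.
move=> /= /andP[e_vt1 pt] /and3P[v_t t1_t ut] sz few.
set j := find (e v) t.
have j_lt_r : j.+1 < r.
  rewrite ltnNge; apply: contraL few => r_le; rewrite -leqNgt.
  have deg' : 3 <= #|[set y | e v y] :\ t1|.
    by move: deg_v; rewrite (cardsD1 t1) inE e_vt1.
  apply: leq_trans deg' (subset_leq_card _); apply/subsetP => y; rewrite !inE => /andP[yt1 e_vy].
  rewrite e_vy -(prednK r_gt0) /= inE negb_or yt1 /=; apply: contraL e_vy => y_in.
  have le_j : r.-1 <= j by lia.
  apply: (@take_find_notin _ (e v) t y).
  by rewrite -(take_takel t le_j) in y_in; apply: mem_take y_in.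
have j_lt : j < size t by move: (find_size (e v) t) sz => /=; rewrite -/j; lia.
have has_v : has (e v) t by rewrite has_find.
have drop_j := drop_nth t1 j_lt.
exists (drop j t); split.
- rewrite drop_j /= (nth_find t1 has_v) /=.
  by move: pt; rewrite -{1}(cat_take_drop j t) cat_path drop_j => /and3P[].
- by rewrite /= drop_uniq // andbT; apply: contra v_t => /mem_drop v_t; rewrite inE v_t orbT.
- by rewrite size_drop /=; lia.
- have sub : t1 |: free_nbrs v (t1 :: t) \subset free_nbrs v (drop j t).
    apply/subsetP => y; rewrite !inE => /orP[/eqP ->|/andP[-> h]].
      by rewrite e_vt1 /=; apply: contra t1_t => /mem_drop.
    by apply: contra h => /mem_drop ->; rewrite orbT.
  by apply: leq_trans (subset_leq_card sub); rewrite cardsU1 !inE eqxx andbF.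
Qed.

Lemma free_nbrs_take (v : T) (t : seq T) k : #|free_nbrs v t| <= #|free_nbrs v (take k t)|.
Proof.
apply/subset_leq_card/subsetP => y; rewrite !inE => /andP[-> /=].
by apply: contra => /mem_take.
Qed.

(* Iterating the shortcut: if [n] more free neighbours of [v] would make three
   and the path from [v] has at least [r * n.+1] vertices, then S_{1,1,1,r}
   is a subgraph; each shortcut costs fewer than [r] vertices and frees one
   more neighbour. *)
Lemma spider_of_long_path (r n : nat) v t :
  0 < r -> 4 <= #|[set y | e v y]| -> path e v t -> uniq (v :: t) ->
  3 <= #|free_nbrs v t| + n -> r * n.+1 <= size t ->
  contains_subgraph (spider 1 1 1 r) e.
Proof.
move=> r_gt0 deg_v; elim: n t => [|n IH] t pt ut enough sz.
all: case: (leqP 3 #|free_nbrs v (take r t)|) => [many|few].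
1,3: apply: (spider_of_free_leg (take_path r pt)) many => //; last by rewrite size_takel; nia.
1,2: by move: ut => /= /andP[v_t ut]; rewrite take_uniq // andbT; apply: contra v_t => /mem_take.
  by move: (free_nbrs_take v t r); lia.
have r_le : r <= size t by nia.
have [t' [pt' ut' sz' more]] := shortcut r_gt0 deg_v pt ut r_le few.
by apply: (IH t') => //; nia.
Qed.

End Spider.

Section Paths.
Variables (T : finType) (e : rel T).
Hypothesis esym : symmetric e.

(* A vertex [w] of a path [P] starts a path inside [P] containing at least
   half of the vertices of [P]: walk along [P] towards its farther end. *)
Lemma half_subpath (P : seq T) w : sorted e P -> uniq P -> w \in P ->
  exists t, [/\ path e w t, uniq (w :: t), {subset w :: t <= P} & size P <= 2 * size (w :: t)].
Proof.
move=> sP uP wP; set i := index w P.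
have i_lt : i < size P by rewrite index_mem.
have nth_i : nth w P i = w by rewrite nth_index.
case: (leqP (size P) (2 * (size P - i))) => long_tail.
  have dn := drop_nth w i_lt; rewrite nth_i in dn.
  exists (drop i.+1 P); split.
  - by have := drop_sorted i sP; rewrite dn.
  - by rewrite -dn drop_uniq.
  - by move=> y; rewrite -dn => /mem_drop.
  - by rewrite -dn size_drop.
have tn := take_nth w i_lt; rewrite nth_i in tn.
exists (rev (take i P)); split.
- have := take_sorted i.+1 sP; rewrite tn -rev_sorted rev_rcons /=.
  by rewrite (@eq_path _ _ e) // => a b; rewrite /= esym.
- by rewrite -rev_rcons rev_uniq -tn take_uniq.
- by move=> y; rewrite -rev_rcons mem_rev -tn => /mem_take.
- by rewrite /= size_rev size_take i_lt; lia.
Qed.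

(* In a connected graph, any vertex [v] starts a path with at least about half
   as many vertices as a given path [P]: go from [v] to the first vertex [w]
   of [P] reached by a shortest route, then follow [P] from [w]. *)
Lemma path_from_vertex v (P : seq T) : connected_graph e ->
  sorted e P -> uniq P -> 0 < size P ->
  exists t, [/\ path e v t, uniq (v :: t) & size P <= 2 * size t + 2].
Proof.
move=> conn sP uP nP.
case vP: (v \in P).
  have [t [pt ut _ st]] := half_subpath sP uP vP.
  by exists t; split => //; move: st => /=; lia.
case: P sP uP nP vP => [//|x0 P'] sP uP _ vP.
have /connectP [s0 ps0 hx0] := conn v x0.
have last_P : last v s0 \in x0 :: P' by rewrite -hx0 mem_head.
case: (shortenP ps0) last_P => s ps us _ last_P.
set k := find (mem (x0 :: P')) s.
have has_P : has (mem (x0 :: P')) s.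
  apply/hasP; exists (last v s) => //.
  have := mem_last v s; rewrite inE => /orP[/eqP h|//].
  by rewrite h vP in last_P.
have k_lt : k < size s by rewrite -has_find.
set w := nth v s k.
have wP : w \in x0 :: P' by have := nth_find v has_P.
have [t [pt ut sub st]] := half_subpath sP uP wP.
have dn := drop_nth v k_lt.
exists (take k s ++ w :: t); split.
- rewrite cat_path take_path //= pt andbT.
  by move: ps; rewrite -{1}(cat_take_drop k s) cat_path dn /= => /and3P[].
- move: us => /= /andP[vs us].
  rewrite /= mem_cat negb_or -andbA; apply/and3P; split.
  + by apply: contra vs => /mem_take.
  + by apply/negP => /sub; rewrite vP.
  + rewrite cat_uniq take_uniq // ut /= andbT.
    apply/negP => /orP[ws|/hasP[y yt ys]].
      by have := take_find_notin ws; rewrite /= wP.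
    by have := take_find_notin ys; rewrite /= (sub y) // inE yt orbT.
- by rewrite size_cat; move: st => /=; lia.
Qed.

End Paths.

Section NormalForests.
Variables (T : finType) (e : rel T).
Hypothesis esym : symmetric e.

Definition induced (S : {set T}) : rel T := fun a b => [&& e a b, a \in S & b \in S].

Lemma induced_sym (S : {set T}) : connect_sym (induced S).
Proof. by apply: sym_connect_sym => a b; rewrite /induced esym [X in _ && X = _]andbC. Qed.

Definition attached (z : option T) (w : T) : bool := if z is Some z0 then e z0 w else true.

Definition normal_forest (S : {set T}) (z : option T) (p : T -> option T) : Prop :=
  [/\ (forall v, v \notin S -> p v = None),
      (forall v u, p v = Some u -> e v u /\ u \in S),
      (exists d : T -> nat, forall v u, p v = Some u -> d u < d v),
      (forall a b, a \in S -> b \in S -> e a b -> ancestor p a b \/ ancestor p b a) &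
      (forall v, v \in S -> p v = None -> attached z v)].

Lemma normal_forest0 z : normal_forest set0 z (fun _ => None).
Proof.
by split=> //; [exists (fun _ => 0) | move=> a b; rewrite inE | move=> v; rewrite inE].
Qed.

Lemma normal_forest_root (C : {set T}) x z pC :
  x \notin C -> attached z x -> normal_forest C (Some x) pC ->
  exists p, normal_forest (x |: C) z p.
Proof.
move=> xC zx [out par [d dec] edges roots].
pose p v := if v \in C then Some (odflt x (pC v)) else None.
have ext w u : pC w = Some u -> p w = Some u.
  by rewrite /p; case: ifP => [_ -> //|/negbT /out ->].
have below_x b : b \in C -> ancestor p x b.
  move=> bC; have [k [rho [k_rho rho_root]]] := root_reach dec b.
  have rhoC : rho \in C by apply: (pit_in (fun v u h => (par v u h).2)) k_rho.
  by exists k.+1; rewrite /= (pit_ext ext k_rho) /= /p rhoC rho_root.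
exists p; split.
- by move=> v; rewrite !inE negb_or /p => /andP[_ /negbTE ->].
- move=> v u; rewrite /p; case: ifP => // vC [<-].
  case pv: (pC v) => [u'|] /=.
    by have [? u'C] := par _ _ pv; rewrite inE u'C orbT.
  by rewrite setU11 esym; split=> //; exact: roots v vC pv.
- exists (fun v => if v \in C then (d v).+1 else 0) => v u; rewrite /p.
  case: ifP => // vC [<-]; case pv: (pC v) => [u'|] /=; last by rewrite (negbTE xC).
  by have [_ u'C] := par _ _ pv; rewrite u'C ltnS; apply: dec.
- move=> a b; rewrite !inE => /orP[/eqP ->|aC] /orP[/eqP ->|bC] eab.
  + by left; exists 0.
  + by left; apply: below_x.
  + by right; apply: below_x.
  + by case: (edges a b aC bC eab) => h; [left | right]; apply: ancestor_ext h.
- by move=> v; rewrite !inE /p => /orP[/eqP -> //|vC]; rewrite vC.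
Qed.

Lemma normal_forest_union (A B : {set T}) z pA pB :
  [disjoint A & B] -> (forall a b, a \in A -> b \in B -> ~~ e a b) ->
  normal_forest A z pA -> normal_forest B z pB -> exists p, normal_forest (A :|: B) z p.
Proof.
move=> dAB noAB [outA parA [dA decA] edgesA rootsA] [outB parB [dB decB] edgesB rootsB].
have inB_notA v : v \in B -> v \notin A.
  by move=> vB; apply: contraL dAB => vA; apply/pred0Pn; exists v; apply/andP.
pose p v := if v \in A then pA v else pB v.
have extA w u : pA w = Some u -> p w = Some u.
  by rewrite /p; case: ifP => [_ -> //|/negbT /outA ->].
have extB w u : pB w = Some u -> p w = Some u.
  rewrite /p; case: ifP => [wA|_ //]; case: (boolP (w \in B)) => [/inB_notA|/outB ->//].
  by rewrite wA.
exists p; split.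
- by move=> v; rewrite inE negb_or /p => /andP[/negbTE -> /outB].
- move=> v u; rewrite /p !inE; case: ifP => _ /[dup] h.
  + by have [? ->] := parA _ _ h.
  + by have [? ->] := parB _ _ h; rewrite orbT.
- exists (fun v => if v \in A then dA v else dB v) => v u; rewrite /p.
  case: ifP => [_ h|vA h]; first by have [_ ->] := parA _ _ h; apply: decA.
  by have [_ uB] := parB _ _ h; rewrite (negbTE (inB_notA _ uB)); apply: decB.
- move=> a b; rewrite !inE => /orP[aA|aB] /orP[bA|bB] eab.
  + by case: (edgesA a b aA bA eab) => h; [left | right]; apply: ancestor_ext extA _ _ h.
  + by move: (noAB a b aA bB); rewrite eab.
  + by move: (noAB b a bA aB); rewrite esym eab.
  + by case: (edgesB a b aB bB eab) => h; [left | right]; apply: ancestor_ext extB _ _ h.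
- move=> v; rewrite inE /p => /orP[vA|vB]; first by rewrite vA; apply: rootsA.
  by rewrite (negbTE (inB_notA _ vB)); apply: rootsB.
Qed.

Definition component (S : {set T}) x : {set T} := [set y in S | connect (induced S) x y].

Lemma component_closed (S : {set T}) x : closed (induced S) (component S x).
Proof.
apply: (intro_closed (induced_sym S)) => a b ab; have /and3P[_ _ bS] := ab.
by rewrite !inE bS => /andP[_ /connect_trans]; apply; apply: connect1.
Qed.

(* Removing [x] from its component [C]: every nonempty union [K] of components
   of [G[C :\ x]] contains a neighbour of [x], as otherwise [K] would be a union
   of components of [G[S]] inside [C] avoiding [x]. *)
Lemma nbr_in_component (S : {set T}) x (K : {set T}) :
  K \subset component S x :\ x -> closed (induced (component S x :\ x)) K -> K != set0 ->
  exists2 w, w \in K & e x w.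
Proof.
move=> subK clK /set0Pn[k kK].
case: (boolP [exists w in K, e x w]) => [/exists_inP[w wK xw]|none]; first by exists w.
have clK_S : closed (induced S) K.
  apply: (intro_closed (induced_sym S)) => a b /[dup] ab /and3P[eab _ bS] aK.
  have aC : a \in component S x :\ x := subsetP subK a aK.
  have bC : b \in component S x.
    by rewrite -(@component_closed S x a b ab); move: aC; rewrite inE => /andP[].
  have bx : b != x.
    by apply: contraNneq none => b_x; apply/exists_inP; exists a; rewrite // -b_x esym.
  by rewrite -(clK a b) // /induced eab aC in_setD1 bx bC.
have := subsetP subK k kK; rewrite !inE => /and3P[_ _ xk].
have := closed_connect clK_S xk; rewrite kK => xK.
by have := subsetP subK x xK; rewrite !inE eqxx.
Qed.

(* Since no edge leaves the component [C] of [x], a union of components of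
   [G[S :\: C]] is also a union of components of [G[S]]. *)
Lemma rest_closed (S : {set T}) x (K : {set T}) :
  K \subset S :\: component S x -> closed (induced (S :\: component S x)) K ->
  closed (induced S) K.
Proof.
move=> subK clK; apply: (intro_closed (induced_sym S)) => a b /[dup] ab /and3P[eab _ bS] aK.
have := subsetP subK a aK; rewrite in_setD => /andP[aC aS].
have bC : b \notin component S x by rewrite -(@component_closed S x a b ab).
by rewrite -(clK a b) // /induced eab !in_setD aC bC aS bS.
Qed.

(* Existence of normal forests (the depth-first search argument): if every
   component of [G[S]] contains a vertex adjacent to [z] (stated for all
   nonempty edge-closed [K], i.e. unions of components), pick such a vertex
   [x] as a root, build a normal forest of its component minus [x] below [x],
   and one of the remaining components below [z]. *)
Lemma normal_forest_exists n (S : {set T}) z : #|S| <= n ->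
  (forall K : {set T}, K \subset S -> closed (induced S) K -> K != set0 ->
     exists2 w, w \in K & attached z w) ->
  exists p, normal_forest S z p.
Proof.
elim: n S z => [|n IH] S z sizeS hyp;
  (case: (set_0Vmem S) => [-> | [w0 w0S]]; first by exists (fun _ => None); apply: normal_forest0).
  by move: sizeS; rewrite leqn0 => /eqP/cards0_eq S0; rewrite S0 inE in w0S.
have clS : closed (induced S) S by apply: (intro_closed (induced_sym S)) => a b /and3P[].
have S0 : S != set0 by apply/set0Pn; exists w0.
have [x xS zx] := hyp S (subxx S) clS S0.
set C := component S x.
have xC : x \in C by rewrite inE xS connect0.
have sizeSx : #|S :\ x| <= n by move: sizeS; rewrite (cardsD1 x S) xS.
have [pC fC] : exists p, normal_forest (C :\ x) (Some x) p.
  apply: IH => [|K sub cl ne]; last exact: nbr_in_component sub cl ne.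
  apply: leq_trans (subset_leq_card _) sizeSx; apply: setSD.
  by apply/subsetP => y; rewrite inE => /andP[].
have [pR fR] : exists p, normal_forest (S :\: C) z p.
  apply: IH => [|K sub cl ne].
    by apply: leq_trans (subset_leq_card _) sizeSx; apply: setDS; rewrite sub1set.
  exact: hyp K (subset_trans sub (subsetDl S C)) (rest_closed sub cl) ne.
have xCx : x \notin C :\ x by rewrite setD11.
have [pX] := normal_forest_root xCx zx fC; rewrite setD1K // => fX.
have -> : S = C :|: S :\: C.
  apply/setP => y; rewrite in_setU in_setD.
  by case: (boolP (y \in C)) => [|_] //=; rewrite inE => /andP[->].
apply: normal_forest_union fX fR; first by rewrite disjoint_sym disjoints_subset subsetDr.
move=> a b aC; rewrite in_setD => /andP[bC bS]; apply: contra bC => eab.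
rewrite -(@component_closed S x a b) // /induced eab bS andbT.
by move: aC; rewrite inE => /andP[].
Qed.

End NormalForests.

Unset Implicit Arguments.

Theorem theorem11 (r : nat) (hr : 0 < r) :
  exists c : nat, forall (T : finType) (e : rel T),
    simple_graph e -> connected_graph e ->
    ~ contains_subgraph (spider 1 1 1 r) e ->
    ~ subcubic e ->
    treedepth_le e c.
Proof.
exists (8 * r + 1) => T e [esym eirr] conn no_spider not_subcubic.
have [v0 deg_v0] : exists v0, 4 <= #|[set u | e v0 u]|.
  case: (boolP [exists v, 3 < #|[set u | e v u]|]) => [/existsP[v] | none]; first by exists v.
  by case: not_subcubic => v; move: none; rewrite negb_exists => /forallP/(_ v); rewrite -leqNgt.
have [p [_ par [d dec] edges _]] : exists p, normal_forest e [set: T] None p.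
  by apply: (normal_forest_exists esym (leqnn _)) => K _ _ /set0Pn[w wK]; exists w.
exists p; split; last by move=> a b; apply: edges; rewrite inE.
(* A chain of 8r + 2 vertices would give a path of 4r vertices from [v0]. *)
move=> v; case anc: (pit p (8 * r + 1) v) => [u|//]; case: no_spider.
have [s [ps us size_s _ _]] := ancestor_path (fun v u h => (par v u h).1) dec anc.
have [t [pt ut size_t]] := path_from_vertex esym v0 conn (ps : sorted e (v :: s)) us isT.
apply: (spider_of_long_path esym eirr (n := 3) hr deg_v0 pt ut); first exact: leq_addl.
by move: size_t; rewrite /= size_s; nia.
Qed.
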